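(* Let $G$ be a connected graph in $\mathcal{C}$ and $C$ an induced $C_5$ in $G$. If $X\neq\emptyset$, then $|R|\le 2$ or $X$ is a clique cutset of $G$.
   Context: $\mathcal{C}=\mathrm{Free}(\text{claw}, 4K_1, \text{5-wheel}, C_5\text{-twin}, P_5\text{-twin}, K_5-e)$, where $\mathrm{Free}(L)$ is the class of graphs with no induced subgraph isomorphic to a member of $L$; the claw is $K_{1,3}$; $4K_1$ is the edgeless graph on 4 vertices; the 5-wheel is $C_5$ plus a vertex adjacent to all five cycle vertices; the $C_5$-twin is $C_5$ plus a new vertex adjacent to one cycle vertex $v$ and both cycle-neighbours of $v$; the $P_5$-twin is a path $p_1p_2p_3p_4p_5$ plus a new vertex adjacent to exactly $p_2,p_3,p_4$; $K_5-e$ is $K_5$ minus one edge. Given an induced cycle $C$ of length 5 with vertices $0,\dots,4$ in cyclic order (indices taken mod 5): $R$ is the set of vertices outside $C$ with no neighbour in $C$; $X_j$ is the set of vertices outside $C$ whose neighbourhood in $C$ is exactly $\{j,j+1\}$; $Y_j$ is the set of vertices outside $C$ whose neighbourhood in $C$ is exactly $\{j,j+1,j+2,j+3\}$; $X=\bigcup_j X_j$, $Y=\bigcup_j Y_j$. A clique cutset of $G$ is a set $S$ of vertices inducing a clique such that $G-S$ is disconnected. *)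

From mathcomp Require Import all_boot.
Set Implicit Arguments. Unset Strict Implicit. Unset Printing Implicit Defensive.

Definition mkgraph {n : nat} (f : nat -> nat -> bool) : rel 'I_n :=
  fun i j => (i != j) && (f i j || f j i).

Definition induced_sub (T : finType) (e : rel T) (n : nat) (h : rel 'I_n) : Prop :=
  exists f : 'I_n -> T, injective f /\ forall i j, e (f i) (f j) = h i j.

Definition cyc5 (i j : nat) : bool := (j == (i + 1) %% 5).

Definition claw : rel 'I_4 := mkgraph (fun i j => (i == 0) && (j != 0)).
Definition fourK1 : rel 'I_4 := mkgraph (fun _ _ => false).
Definition wheel5 : rel 'I_6 :=
  mkgraph (fun i j => ((i < 5) && (j < 5) && cyc5 i j) || ((i < 5) && (j == 5))).
(* C_5-twin: C_5 on 0..4, vertex 5 adjacent to 0 and its cycle neighbours 1,4 *)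
Definition C5twin : rel 'I_6 :=
  mkgraph (fun i j => ((i < 5) && (j < 5) && cyc5 i j)
                       || ((j == 5) && ((i == 0) || (i == 1) || (i == 4)))).
Definition P5twin : rel 'I_6 :=
  mkgraph (fun i j => ((j < 5) && (j == i + 1))
                       || ((j == 5) && ((i == 1) || (i == 2) || (i == 3)))).
Definition K5e : rel 'I_5 := mkgraph (fun i j => ~~ ((i <= 1) && (j <= 1))).

Definition in_classC (T : finType) (e : rel T) : Prop :=
  ~ induced_sub e claw /\ ~ induced_sub e fourK1 /\ ~ induced_sub e wheel5 /\
  ~ induced_sub e C5twin /\ ~ induced_sub e P5twin /\ ~ induced_sub e K5e.

Definition simple_graph (T : finType) (e : rel T) : Prop :=
  symmetric e /\ irreflexive e.

Definition connected_graph (T : finType) (e : rel T) : Prop :=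
  forall x y : T, connect e x y.

Definition induced_C5 (T : finType) (e : rel T) (c : 'I_5 -> T) : Prop :=
  injective c /\ forall i j : 'I_5, e (c i) (c j) = mkgraph cyc5 i j.

Definition s5 (j : 'I_5) : 'I_5 := inord ((j + 1) %% 5).

Definition nbC (T : finType) (e : rel T) (c : 'I_5 -> T) (v : T) : {set 'I_5} :=
  [set i | e v (c i)].

Definition outC (T : finType) (c : 'I_5 -> T) (v : T) : bool := v \notin codom c.

Definition Rset (T : finType) (e : rel T) (c : 'I_5 -> T) : {set T} :=
  [set v | outC c v & nbC e c v == set0].

Definition Xj (T : finType) (e : rel T) (c : 'I_5 -> T) (j : 'I_5) : {set T} :=
  [set v | outC c v & nbC e c v == [set j; s5 j]].

Definition Xset (T : finType) (e : rel T) (c : 'I_5 -> T) : {set T} :=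
  \bigcup_(j : 'I_5) Xj e c j.

Definition clique (T : finType) (e : rel T) (S : {set T}) : Prop :=
  forall x y, x \in S -> y \in S -> x != y -> e x y.

(* G - S is disconnected: two vertices outside S not joined by a path avoiding S *)
Definition clique_cutset (T : finType) (e : rel T) (S : {set T}) : Prop :=
  clique e S /\
  exists x y, [/\ x \notin S, y \notin S &
    ~~ connect [rel u v | e u v && (u \notin S) && (v \notin S)] x y].

From mathcomp Require Import all_boot.
Set Implicit Arguments. Unset Strict Implicit. Unset Printing Implicit Defensive.

(* Suppose |R| >= 3.  Two nonadjacent vertices of R together with two nonadjacent
   cycle vertices form a 4K_1, so R is a clique; in the same way a vertex of X_j is
   adjacent to all of R (use two nonadjacent cycle vertices outside {j, j+1}).  Two
   nonadjacent vertices of X and three vertices of R would then induce K_5 - e, so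
   X is a clique.  Claw-freeness (with a leaf in R) forces the cycle-neighbourhood
   of a neighbour w of R to be a clique of C_5: not an edge if w is not in X, and
   not a single vertex i (claw at i), so w is in R.  Hence R is a union of
   components of G - X that misses C, and X is a clique cutset. *)

Notation o0 := (@Ordinal 5 0 isT).
Notation o1 := (@Ordinal 5 1 isT).
Notation o2 := (@Ordinal 5 2 isT).
Notation o3 := (@Ordinal 5 3 isT).
Notation o4 := (@Ordinal 5 4 isT).

Lemma ord5_ind (P : 'I_5 -> Prop) : P o0 -> P o1 -> P o2 -> P o3 -> P o4 -> forall k, P k.
Proof.
by move=> P0 P1 P2 P3 P4 [[|[|[|[|[|m]]]]] lt_m5] //; rewrite (bool_irrelevance lt_m5 isT).
Qed.

Lemma ord4_ind (P : 'I_4 -> Prop) :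
  P (@Ordinal 4 0 isT) -> P (@Ordinal 4 1 isT) -> P (@Ordinal 4 2 isT) ->
  P (@Ordinal 4 3 isT) -> forall k, P k.
Proof.
by move=> P0 P1 P2 P3 [[|[|[|[|m]]]] lt_m4] //; rewrite (bool_irrelevance lt_m4 isT).
Qed.

Lemma s5_val (j : 'I_5) : val (s5 j) = (j + 1) %% 5.
Proof. by rewrite /= inordK // ltn_pmod. Qed.

Lemma eq_s5 (k j : 'I_5) : (k == s5 j) = (val k == (j + 1) %% 5).
Proof. by rewrite -val_eqE s5_val. Qed.

Lemma cyc5_nonadj_off_edge j : exists a b : 'I_5,
  [/\ a \notin [:: j; s5 j], b \notin [:: j; s5 j], a != b & ~~ mkgraph cyc5 a b].
Proof.
elim/ord5_ind: j; [exists o2, o4 | exists o3, o0 | exists o4, o1 | exists o0, o2 | exists o1, o3];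
  by rewrite !inE !eq_s5.
Qed.

Lemma cyc5_nbrs_nonadj i : exists a b : 'I_5,
  [/\ mkgraph cyc5 i a, mkgraph cyc5 i b, a != b & ~~ mkgraph cyc5 a b].
Proof.
elim/ord5_ind: i; [exists o1, o4 | exists o2, o0 | exists o3, o1 | exists o4, o2 | exists o0, o3];
  by [].
Qed.

Lemma cyc5_clique_empty_vertex_or_edge (p : pred 'I_5) :
  (forall a b : 'I_5, a != b -> ~~ mkgraph cyc5 a b -> ~~ (p a && p b)) ->
  [\/ forall k, ~~ p k,
      exists i, forall k, p k = (k == i)
    | exists j, forall k, p k = (k == j) || (k == s5 j)].
Proof.
move=> clq_p.
have := clq_p o0 o2 isT isT; have := clq_p o0 o3 isT isT; have := clq_p o1 o3 isT isT.
have := clq_p o1 o4 isT isT; have := clq_p o2 o4 isT isT.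
(* Of the 32 truth tables only the 11 cliques survive; each is matched by a witness. *)
case p0: (p o0); case p1: (p o1); case p2: (p o2); case p3: (p o3); case p4: (p o4);
  move=> //= _ _ _ _ _;
  let table := (elim/ord5_ind; rewrite ?p0 ?p1 ?p2 ?p3 ?p4 ?eq_s5) in
  let witness := first [ by exists o0; table | by exists o1; table | by exists o2; table
                       | by exists o3; table | by exists o4; table ] in
  first [ by apply: Or31; table | apply: Or32; witness | apply: Or33; witness ].
Qed.

Lemma induced_sub_seq (T : finType) (e : rel T) n (h : rel 'I_n) (x0 : T) (s : seq T) :
  size s = n -> uniq s -> (forall i j : 'I_n, e (nth x0 s i) (nth x0 s j) = h i j) ->
  induced_sub e h.
Proof.
move=> size_s uniq_s e_s; exists (fun i => nth x0 s i); split=> // i j /eqP.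
by rewrite nth_uniq ?size_s // => /eqP /val_inj.
Qed.

Ltac edge_by_hyps esym eirr :=
  match goal with
  | |- ?e ?u ?u = _ => by rewrite eirr
  | H : is_true (?e ?u ?v) |- ?e ?u ?v = _ => by rewrite H
  | H : is_true (?e ?v ?u) |- ?e ?u ?v = _ => by rewrite esym H
  | H : is_true (~~ ?e ?u ?v) |- ?e ?u ?v = _ => by rewrite (negbTE H)
  | H : is_true (~~ ?e ?v ?u) |- ?e ?u ?v = _ => by rewrite esym (negbTE H)
  end.

Section Patterns.

Variables (T : finType) (e : rel T).
Hypotheses (esym : symmetric e) (eirr : irreflexive e).

Lemma adj_neq x y : e x y -> x != y.
Proof. by apply: contraTneq => ->; rewrite eirr. Qed.

Lemma claw_sub a b c d : e a b -> e a c -> e a d ->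
  b != c -> b != d -> c != d -> ~~ e b c -> ~~ e b d -> ~~ e c d -> induced_sub e claw.
Proof.
move=> ab ac ad bc bd cd nbc nbd ncd; apply: (@induced_sub_seq _ _ _ _ a [:: a; b; c; d]) => //.
  by rewrite /= !inE !negb_or bc bd cd !adj_neq.
by elim/ord4_ind; elim/ord4_ind; rewrite /claw /mkgraph /=; edge_by_hyps esym eirr.
Qed.

Lemma fourK1_sub a b c d : a != b -> a != c -> a != d -> b != c -> b != d -> c != d ->
  ~~ e a b -> ~~ e a c -> ~~ e a d -> ~~ e b c -> ~~ e b d -> ~~ e c d ->
  induced_sub e fourK1.
Proof.
move=> ab ac ad bc bd cd nab nac nad nbc nbd ncd.
apply: (@induced_sub_seq _ _ _ _ a [:: a; b; c; d]) => //.
  by rewrite /= !inE !negb_or ab ac ad bc bd cd.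
by elim/ord4_ind; elim/ord4_ind; rewrite /fourK1 /mkgraph /=; edge_by_hyps esym eirr.
Qed.

Lemma K5e_sub a b c d f : a != b -> ~~ e a b ->
  e a c -> e a d -> e a f -> e b c -> e b d -> e b f -> e c d -> e c f -> e d f ->
  induced_sub e K5e.
Proof.
move=> ab nab ac ad af bc bd bf cd cf df.
apply: (@induced_sub_seq _ _ _ _ a [:: a; b; c; d; f]) => //.
  by rewrite /= !inE !negb_or ab !adj_neq.
by elim/ord5_ind; elim/ord5_ind; rewrite /K5e /mkgraph /=; edge_by_hyps esym eirr.
Qed.

End Patterns.

Section InducedC5.

Variables (T : finType) (e : rel T) (c : 'I_5 -> T).
Hypotheses (esym : symmetric e) (eirr : irreflexive e) (C5c : induced_C5 e c).
Hypotheses (noclaw : ~ induced_sub e claw) (no4K1 : ~ induced_sub e fourK1)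
  (noK5e : ~ induced_sub e K5e).

Lemma neq_C5 v i : v \notin codom c -> v != c i.
Proof. by apply: contraNneq => ->; rewrite codom_f. Qed.

Lemma C5_neq i j : i != j -> c i != c j.
Proof. by apply: contraNneq => /C5c.1 ->. Qed.

Lemma RsetP v :
  reflect (v \notin codom c /\ forall i, ~~ e v (c i)) (v \in Rset e c).
Proof.
rewrite inE; apply: (iffP andP) => -[out_v nb_v]; split=> //.
  by move=> i; apply: contraT => /negPn vi; move/eqP/setP/(_ i): nb_v; rewrite !inE vi.
by apply/eqP/setP => i; rewrite !inE (negbTE (nb_v i)).
Qed.

Lemma XsetP v : reflect (v \notin codom c /\
    exists j, forall i, e v (c i) = (i == j) || (i == s5 j)) (v \in Xset e c).
Proof.
apply: (iffP bigcupP) => [[j _]|[out_v [j nb_v]]].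
  rewrite inE => /andP[out_v /eqP/setP nb_v]; split=> //.
  by exists j => i; move: (nb_v i); rewrite !inE.
by exists j => //; rewrite inE; apply/andP; split=> //; apply/eqP/setP => i; rewrite !inE nb_v.
Qed.

Lemma Rset_notin_Xset r : r \in Rset e c -> r \notin Xset e c.
Proof.
by case/RsetP => _ nb_r; apply/XsetP => -[_ [j nb_rj]]; move: (nb_r j); rewrite nb_rj eqxx.
Qed.

Lemma Rset_clique : clique e (Rset e c).
Proof.
move=> r r' /RsetP[out_r nb_r] /RsetP[out_r' nb_r'] rr'; apply: contraT => nrr'.
case: no4K1; apply: (@fourK1_sub _ e esym eirr r r' (c o0) (c o2)) => //;
  by rewrite ?C5_neq ?neq_C5 ?C5c.2.
Qed.

Lemma Xset_Rset_adj x r : x \in Xset e c -> r \in Rset e c -> e x r.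
Proof.
move=> /XsetP[out_x [j nb_x]] /RsetP[out_r nb_r]; apply: contraT => nxr.
have [a [b [a_off b_off ab nab]]] := cyc5_nonadj_off_edge j.
rewrite !inE in a_off b_off.
have xr : x != r by apply: contraNneq (nb_r j) => <-; rewrite nb_x eqxx.
case: no4K1; apply: (@fourK1_sub _ e esym eirr x r (c a) (c b)) => //;
  by rewrite ?C5_neq ?neq_C5 ?C5c.2 ?nb_x ?nb_r.
Qed.

Lemma Xset_clique : 2 < #|Rset e c| -> clique e (Xset e c).
Proof.
case/card_gt2P => [r1 [r2 [r3 [[r1R r2R r3R] [r12 r23 r31]]]]] x x' xX x'X xx'.
apply: contraT => nxx'; case: noK5e.
have RR := Rset_clique; have XR := Xset_Rset_adj.
by apply: (K5e_sub esym eirr xx' nxx' (XR _ _ xX r1R) (XR _ _ xX r2R) (XR _ _ xX r3R)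
  (XR _ _ x'X r1R) (XR _ _ x'X r2R) (XR _ _ x'X r3R));
  apply: RR; rewrite // eq_sym.
Qed.

Lemma Rset_closed_nbr u w : u \in Rset e c -> e u w -> w \notin Xset e c -> w \in Rset e c.
Proof.
move=> /RsetP[out_u nb_u] uw wX.
have out_w : w \notin codom c.
  by apply/codomP => -[i wi]; move: (nb_u i); rewrite -wi uw.
have clq_w (a b : 'I_5) : a != b -> ~~ mkgraph cyc5 a b -> ~~ (e w (c a) && e w (c b)).
  move=> ab nab; apply/andP => -[wa wb]; case: noclaw.
  apply: (@claw_sub _ e esym eirr w u (c a) (c b));
    by rewrite ?C5_neq ?neq_C5 ?C5c.2 // esym.
case: (cyc5_clique_empty_vertex_or_edge clq_w) => [nb_w | [i nb_w] | [j nb_w]].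
- exact/RsetP.
- have [a [b [ia ib ab nab]]] := cyc5_nbrs_nonadj i.
  case: noclaw; apply: (@claw_sub _ e esym eirr (c i) w (c a) (c b));
    rewrite ?nb_w ?C5_neq ?neq_C5 ?C5c.2 //; first by rewrite esym nb_w.
  - by case/andP: ia; rewrite eq_sym.
  - by case/andP: ib; rewrite eq_sym.
- by case/negP: wX; apply/XsetP; split=> //; exists j.
Qed.

Lemma Rset_closed_off_Xset :
  closed [rel u v | e u v && (u \notin Xset e c) && (v \notin Xset e c)] (Rset e c).
Proof.
apply: intro_closed => [|u w /andP[/andP[uw _] wX] uR]; last exact: Rset_closed_nbr uR uw wX.
by apply: sym_connect_sym => u v /=; rewrite esym andbAC.
Qed.

End InducedC5.

Theorem claim16 (T : finType) (e : rel T) (c : 'I_5 -> T) :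
  simple_graph e -> in_classC e -> connected_graph e -> induced_C5 e c ->
  Xset e c != set0 ->
  #|Rset e c| <= 2 \/ clique_cutset e (Xset e c).
Proof.
move=> [esym eirr] [noclaw [no4K1 [_ [_ [_ noK5e]]]]] _ C5c _.
have [|R3] := leqP #|Rset e c| 2; [by left | right].
split; first exact: Xset_clique.
have [r rR] : exists r, r \in Rset e c by apply/set0Pn; rewrite -card_gt0 (ltn_trans _ R3).
have c0R : c o0 \notin Rset e c by apply/RsetP => -[/negP[]]; rewrite codom_f.
exists r, (c o0); split.
- exact: Rset_notin_Xset.
- by apply/XsetP => -[/negP[]]; rewrite codom_f.
- apply: contraNN c0R.
  by move/(closed_connect (Rset_closed_off_Xset esym eirr C5c noclaw)) <-.
Qed.
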